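(* If $\bm{\Omega}$ is positive definite, then a normal mode transformation exists.
   Context: Fix an integer $N\ge 1$, real numbers $v$ with $|v|<1$, $L>0$, $L_{\star}\ge 0$, an integer $M\ge 1$ and real coefficients $c_{1}=1,c_{2},\dots,c_{M}$. Let $F(k)=\sum_{i=1}^{M}(-1)^{i-1}c_{i}L_{\star}^{2i-2}k^{2i-1}$ and $k_{n}=n\pi/L$, and assume $F(k_{n})^{2}\neq v^{2}k_{n}^{2}$ for $n=1,\dots,N$. Put $u_{n}=\sqrt{|F(k_{n})^{2}-v^{2}k_{n}^{2}|}/k_{n}>0$, and $\varepsilon_{n}=1$ if $F(k_{n})^{2}-v^{2}k_{n}^{2}>0$, $\varepsilon_{n}=0$ otherwise. Define $N\times N$ matrices $\bm\sigma,\bm\rho,\bm\xi$ by $\sigma_{nn}=0$, $\sigma_{nm}=\dfrac{2iv\sqrt{nm}\,[1-(-1)^{n+m}]}{\pi\sqrt{u_{n}u_{m}}\,(m^{2}-n^{2})}$ for $n\neq m$, $\bm\rho=\mathrm{diag}(n u_{n}\varepsilon_{n})$, $\bm\xi=\mathrm{diag}(-n u_{n}(1-\varepsilon_{n}))$. With $\mathbf{I}$ the $N\times N$ identity, define the $2N\times 2N$ matrices $\bm{\Sigma}=\begin{pmatrix}\mathbf{I}&\mathbf{0}\\ \mathbf{0}&-\mathbf{I}\end{pmatrix}$, $\bm{\Gamma}=\begin{pmatrix}\mathbf{0}&\mathbf{I}\\ \mathbf{I}&\mathbf{0}\end{pmatrix}$, $\mathbf{R}=\bm{\Sigma}-\begin{pmatrix}\bm\sigma&\bm\sigma\\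 \bm\sigma&\bm\sigma\end{pmatrix}$, $\bm{\Omega}=\begin{pmatrix}\bm\rho&\bm\xi\\ \bm\xi&\bm\rho\end{pmatrix}$. Standing assumption: $\mathbf{R}$ is invertible. Let $\mathbf{D}=\mathbf{R}^{-1}\bm{\Omega}$. Here ${}^{*}$ denotes entrywise complex conjugation and ${}^{\mathrm{H}}$ the conjugate transpose. A normal mode transformation is a $2N\times2N$ matrix $\mathbf{T}$ such that (i) $\mathbf{T}^{\mathrm{H}}\mathbf{R}\mathbf{T}=\bm{\Sigma}$; (ii) $\mathbf{T}=\bm{\Gamma}\mathbf{T}^{*}\bm{\Gamma}$; (iii) $\mathbf{T}^{-1}\mathbf{D}\mathbf{T}=\mathrm{diag}(\mu_{1},\dots,\mu_{N},-\mu_{1},\dots,-\mu_{N})$ for some real numbers $\mu_{n}>0$, where $\mathbf{T}^{-1}=\bm{\Sigma}\mathbf{T}^{\mathrm{H}}\mathbf{R}$. *)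

From HB Require Import structures.
From mathcomp Require Import all_boot all_order all_algebra.
From mathcomp Require Import all_classical all_reals all_analysis.
From mathcomp Require Import complex.
Unset Printing Implicit Defensive.
Import Order.TTheory GRing.Theory Num.Theory.
Local Open Scope ring_scope.
Local Open Scope complex_scope.

Section NormalModes.
Context {R : realType}.
Local Notation C := (R[i]).

Definition mxconj {m n} (A : 'M[C]_(m, n)) : 'M[C]_(m, n) := map_mx Num.conj A.
Definition mxH {m n} (A : 'M[C]_(m, n)) : 'M[C]_(n, m) := (mxconj A)^T.

Definition Fdisp (M : nat) (c : nat -> R) (Ls k : R) : R :=
  \sum_(1 <= i < M.+1) (-1) ^+ (i.-1) * c i * Ls ^+ (2 * i - 2)%N * k ^+ (2 * i - 1)%N.

(* k_n = n pi / L ; indices i : 'I_N stand for n = i+1 *)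
Definition kn (L : R) (n : nat) : R := n%:R * pi / L.

Definition discr M c Ls v L (n : nat) : R :=
  Fdisp M c Ls (kn L n) ^+ 2 - v ^+ 2 * kn L n ^+ 2.

Definition un M c Ls v L (n : nat) : R := Num.sqrt `|discr M c Ls v L n| / kn L n.

Definition epsn M c Ls v L (n : nat) : R := if 0 < discr M c Ls v L n then 1 else 0.

Definition sigma_mx N M c Ls v L : 'M[C]_N :=
  \matrix_(i, j)
    if i == j then 0 else
    let n := (i : nat).+1 in let m := (j : nat).+1 in
    'i * ((2 * v * Num.sqrt (n%:R * m%:R) * (1 - (-1) ^+ (n + m)))
          / (pi * Num.sqrt (un M c Ls v L n * un M c Ls v L m)
             * (m%:R ^+ 2 - n%:R ^+ 2)))%:C.

Definition rho_mx N M c Ls v L : 'M[C]_N :=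
  diag_mx (\row_(i < N) (((i : nat).+1%:R * un M c Ls v L (i : nat).+1
                           * epsn M c Ls v L (i : nat).+1)%:C)).

Definition xi_mx N M c Ls v L : 'M[C]_N :=
  diag_mx (\row_(i < N) ((- ((i : nat).+1%:R * un M c Ls v L (i : nat).+1
                           * (1 - epsn M c Ls v L (i : nat).+1)))%:C)).

Definition Sigma_mx N : 'M[C]_(N + N) := block_mx 1%:M 0 0 (- 1%:M).
Definition Gamma_mx N : 'M[C]_(N + N) := block_mx 0 1%:M 1%:M 0.

Definition R_mx N M c Ls v L : 'M[C]_(N + N) :=
  Sigma_mx N - block_mx (sigma_mx N M c Ls v L) (sigma_mx N M c Ls v L)
                        (sigma_mx N M c Ls v L) (sigma_mx N M c Ls v L).

Definition Omega_mx N M c Ls v L : 'M[C]_(N + N) :=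
  block_mx (rho_mx N M c Ls v L) (xi_mx N M c Ls v L)
           (xi_mx N M c Ls v L) (rho_mx N M c Ls v L).

Definition D_mx N M c Ls v L : 'M[C]_(N + N) :=
  invmx (R_mx N M c Ls v L) *m Omega_mx N M c Ls v L.

Definition posdef {n} (A : 'M[C]_n) : Prop :=
  mxH A = A /\ forall x : 'cV[C]_n, x != 0 -> 0 < (mxH x *m A *m x) 0 0.

Definition normal_mode_transformation N M c Ls v L (T : 'M[C]_(N + N)) : Prop :=
  [/\ mxH T *m R_mx N M c Ls v L *m T = Sigma_mx N,
      T = Gamma_mx N *m mxconj T *m Gamma_mx N &
      exists mu : 'I_N -> R, (forall i, 0 < mu i) /\
        (Sigma_mx N *m mxH T *m R_mx N M c Ls v L) *m D_mx N M c Ls v L *m T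
        = diag_mx (row_mx (\row_(i < N) (mu i)%:C) (\row_(i < N) (- mu i)%:C))].

End NormalModes.

From HB Require Import structures.
From mathcomp Require Import all_boot all_order all_algebra.
From mathcomp Require Import all_classical all_reals all_analysis.
From mathcomp Require Import complex.
From mathcomp Require Import zify.
Set Implicit Arguments.
Unset Strict Implicit.
Unset Printing Implicit Defensive.
Import Order.TTheory GRing.Theory Num.Theory Num.Def.
Local Open Scope ring_scope.
Local Open Scope sesquilinear_scope.

(* Positive definiteness of Omega forces xi = 0, so Omega = diag(rho, rho) with
   rho > 0, and R is Hermitian with Gamma conj(R) Gamma = -R, i.e. R anticommutes
   with the antiunitary involution x |-> Gamma conj(x).  With W = Omega^(-1/2),
   the Hermitian matrix H = W R W is invertible and inherits this symmetry, which
   maps eigenvectors of H for lambda to eigenvectors for -lambda and preserves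
   orthonormality.  The quadratic form of H is positive on the span of its
   positive eigenvectors and negative on the span of their images, so these spans
   meet trivially: H has exactly N positive and N negative eigenvalues.  Stacking
   N orthonormal positive eigenvectors E on their images conj(E) Gamma gives a
   unitary V = Gamma conj(V) Gamma with V H V^* = diag(lambda, -lambda), and
   T = W V^* diag(lambda, lambda)^(-1/2) is a normal mode transformation with
   mu = 1 / lambda. *)

Section ComplexMatrices.
Context {C : numClosedFieldType}.

Lemma trmxC_mul m n p (A : 'M[C]_(m, n)) (B : 'M[C]_(n, p)) :
  (A *m B)^t* = B^t* *m A^t*.
Proof. by rewrite trmx_mul map_mxM. Qed.

Lemma diag_mxN n (a : 'rV[C]_n) : diag_mx (- a) = - diag_mx a.
Proof. exact: raddfN. Qed.

Lemma comm_mx_sandwich n (G A B X : 'M[C]_n) : comm_mx G A -> comm_mx G B ->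
  G *m (A *m X *m B) *m G = A *m (G *m X *m G) *m B.
Proof. by move=> GA GB; rewrite !mulmxA GA -!mulmxA GB. Qed.

Lemma conj_mx_pos m n (A : 'M[C]_(m, n)) :
  (forall i j, 0 < A i j) -> map_mx conjC A = A.
Proof. by move=> A_gt0; apply/matrixP => i j; rewrite mxE; exact/geC0_conj/ltW. Qed.

Lemma conj_diag_mx_pos n (a : 'rV[C]_n) :
  (forall i, 0 < a 0 i) -> map_mx conjC (diag_mx a) = diag_mx a.
Proof. by move=> a_gt0; rewrite map_diag_mx conj_mx_pos // => i j; rewrite ord1. Qed.

Lemma trmxC_diag_mx_pos n (a : 'rV[C]_n) :
  (forall i, 0 < a 0 i) -> (diag_mx a)^t* = diag_mx a.
Proof. by move=> a_gt0; rewrite tr_diag_mx conj_diag_mx_pos. Qed.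

Lemma row_mx_gt0 m n (a : 'rV[C]_m) (b : 'rV[C]_n) :
  (forall i, 0 < a 0 i) -> (forall j, 0 < b 0 j) -> forall k, 0 < row_mx a b 0 k.
Proof. by move=> a_gt0 b_gt0 k; rewrite mxE; case: splitP. Qed.

Definition inv_sqrt_row n (a : 'rV[C]_n) := map_mx (fun x => (sqrtC x)^-1) a.

Lemma inv_sqrt_row_gt0 n (a : 'rV[C]_n) :
  (forall i, 0 < a 0 i) -> forall i, 0 < inv_sqrt_row a 0 i.
Proof. by move=> a_gt0 i; rewrite mxE invr_gt0 sqrtC_gt0. Qed.

Lemma inv_sqrt_row_mx m n (a : 'rV[C]_m) (b : 'rV[C]_n) :
  inv_sqrt_row (row_mx a b) = row_mx (inv_sqrt_row a) (inv_sqrt_row b).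
Proof. exact: map_row_mx. Qed.

Lemma diag_inv_sqrt_rowK n (a : 'rV[C]_n) : (forall i, 0 < a 0 i) ->
  diag_mx (inv_sqrt_row a) *m diag_mx a *m diag_mx (inv_sqrt_row a) = 1%:M.
Proof.
move=> a_gt0; rewrite !mulmx_diag -diag_const_mx; congr diag_mx.
apply/rowP => i; rewrite !mxE -{2}(sqrtCK (a 0 i)) expr2 mulrA mulVf ?mul1r.
  by rewrite mulfV // sqrtC_eq0 gt_eqF.
by rewrite sqrtC_eq0 gt_eqF.
Qed.

Lemma diag_inv_sqrt_row_sqr n (a : 'rV[C]_n) : (forall i, 0 < a 0 i) ->
  diag_mx (inv_sqrt_row a) *m diag_mx (inv_sqrt_row a)
  = diag_mx (map_mx GRing.inv a).
Proof.
move=> a_gt0; rewrite mulmx_diag; congr diag_mx; apply/rowP => i.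
by rewrite !mxE -invfM -expr2 sqrtCK.
Qed.

Lemma diag_formE n (d a : 'rV[C]_n) :
  (a *m diag_mx d *m a^t*) 0 0 = \sum_i d 0 i * `|a 0 i| ^+ 2.
Proof.
rewrite mxE; apply: eq_bigr => i _.
by rewrite mul_mx_diag !mxE normCK mulrAC mulrC.
Qed.

Lemma diag_form_ge0 n (d a : 'rV[C]_n) :
  (forall i, 0 < d 0 i) -> 0 <= (a *m diag_mx d *m a^t*) 0 0.
Proof.
move=> d_gt0; rewrite diag_formE; apply: sumr_ge0 => i _.
by rewrite mulr_ge0 ?exprn_ge0 // ltW.
Qed.

Lemma diag_form_eq0 n (d a : 'rV[C]_n) : (forall i, 0 < d 0 i) ->
  (a *m diag_mx d *m a^t*) 0 0 = 0 -> a = 0.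
Proof.
move=> d_gt0; rewrite diag_formE => sum0; apply/rowP => i.
have /eqP : d 0 i * `|a 0 i| ^+ 2 = 0.
  by apply: (psumr_eq0P _ sum0) => // j _; rewrite mulr_ge0 ?exprn_ge0 // ltW.
by rewrite mulf_eq0 gt_eqF //= sqrf_eq0 normr_eq0 mxE => /eqP.
Qed.

End ComplexMatrices.

Section Eigenrows.
Context {C : numClosedFieldType}.

Lemma eigenrows_form p n (X : 'M[C]_(p, n)) (H : 'M[C]_n) (d : 'rV[C]_p) :
  X \is unitarymx -> X *m H = diag_mx d *m X -> forall a : 'rV[C]_p,
  (a *m X) *m H *m (a *m X)^t* = a *m diag_mx d *m a^t*.
Proof.
move=> /unitarymxP XX XH a.
by rewrite trmxC_mul -(mulmxA a) XH !mulmxA -(mulmxA _ X) XX mulmx1.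
Qed.

Lemma eigenrows_orthogonal p q n (X : 'M[C]_(p, n)) (Y : 'M[C]_(q, n))
    (H : 'M[C]_n) (a : 'rV[C]_p) (b : 'rV[C]_q) :
  H^t* = H -> X *m H = diag_mx a *m X -> Y *m H = diag_mx b *m Y ->
  (forall i j, a 0 i != (b 0 j)^* ) -> X *m Y^t* = 0.
Proof.
move=> HH XH YH ab.
have XHY : diag_mx a *m (X *m Y^t*) = (X *m Y^t*) *m diag_mx (map_mx conjC b).
  rewrite mulmxA -XH -mulmxA -{1}HH -trmxC_mul YH trmxC_mul.
  by rewrite tr_diag_mx map_diag_mx mulmxA.
move: XHY; set Z := X *m Y^t*; clearbody Z => XHY; apply/matrixP => i j.
have /matrixP/(_ i j)/eqP := XHY; rewrite mul_diag_mx mul_mx_diag !mxE.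
rewrite [Z i j * _]mulrC -subr_eq0 -mulrBl mulf_eq0 subr_eq0 (negbTE (ab i j)).
by move/eqP.
Qed.

Lemma pos_neg_eigenrows_leq p q n (E : 'M[C]_(p, n)) (F : 'M[C]_(q, n))
    (H : 'M[C]_n) (a : 'rV[C]_p) (b : 'rV[C]_q) :
  E \is unitarymx -> F \is unitarymx ->
  (forall i, 0 < a 0 i) -> (forall j, 0 < b 0 j) ->
  E *m H = diag_mx a *m E -> F *m H = diag_mx (- b) *m F -> (p + q <= n)%N.
Proof.
(* The quadratic form of H is positive on the row space of E and negative on
   that of F, so the two row spaces meet trivially. *)
move=> Eu Fu a_gt0 b_gt0 EH FH.
have EF0 : (E :&: F)%MS = 0.
  apply/row_matrixP => i; rewrite row0.
  have /submxP[x rE] : (row i (E :&: F) <= E)%MS.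
    exact: submx_trans (row_sub _ _) (capmxSl _ _).
  have /submxP[y rF] : (row i (E :&: F) <= F)%MS.
    exact: submx_trans (row_sub _ _) (capmxSr _ _).
  suff x0 : x = 0 by rewrite rE x0 mul0mx.
  have qxy : (x *m diag_mx a *m x^t*) 0 0 = - (y *m diag_mx b *m y^t*) 0 0.
    have := eigenrows_form Eu EH x; rewrite -rE rF (eigenrows_form Fu FH y).
    by rewrite diag_mxN mulmxN mulNmx => <-; rewrite [LHS]mxE.
  apply: (diag_form_eq0 a_gt0); apply/le_anti.
  by rewrite diag_form_ge0 // andbT qxy oppr_le0 diag_form_ge0.
rewrite -(mxrank_unitary Eu) -(mxrank_unitary Fu) -mxrank_disjoint_sum //.
exact: rank_leq_col.
Qed.

Lemma rowsub_unitarymx m n (g : 'I_m -> 'I_n) (P : 'M[C]_n) :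
  injective g -> P \is unitarymx -> rowsub g P \is unitarymx.
Proof.
move=> g_inj /unitarymxP PP; apply/unitarymxP/matrixP => i j.
have /matrixP/(_ (g i) (g j)) := PP; rewrite !mxE (inj_eq g_inj) => <-.
by apply: eq_bigr => k _; rewrite !mxE.
Qed.

Lemma rowsub_eigenrows m n (g : 'I_m -> 'I_n) (P H : 'M[C]_n) (d : 'rV[C]_n) :
  P *m H = diag_mx d *m P ->
  rowsub g P *m H = diag_mx (colsub g d) *m rowsub g P.
Proof.
move=> PH; rewrite mul_rowsub_mx PH; apply/matrixP => i j.
by rewrite !mul_diag_mx !mxE.
Qed.

Lemma col_mx_unitarymx p q n (E : 'M[C]_(p, n)) (F : 'M[C]_(q, n)) :
  E \is unitarymx -> F \is unitarymx -> E *m F^t* = 0 ->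
  col_mx E F \is unitarymx.
Proof.
move=> /unitarymxP EE /unitarymxP FF EF.
have FE : F *m E^t* = 0 by rewrite -[F]trmxCK -trmxC_mul EF trmx0 map_mx0.
apply/unitarymxP.
by rewrite tr_col_mx map_row_mx mul_col_row EE FF EF FE -scalar_mx_block.
Qed.

Lemma col_mx_eigenrows p q n (E : 'M[C]_(p, n)) (F : 'M[C]_(q, n)) (H : 'M[C]_n)
    (a : 'rV[C]_p) (b : 'rV[C]_q) :
  E *m H = diag_mx a *m E -> F *m H = diag_mx b *m F ->
  col_mx E F *m H = diag_mx (row_mx a b) *m col_mx E F.
Proof.
move=> EH FH.
by rewrite mul_col_mx EH FH diag_mx_row mul_block_col !mul0mx addr0 add0r.
Qed.

Lemma eigenvalue_unit_neq0 p n (X : 'M[C]_(p, n)) (H : 'M[C]_n) (d : 'rV[C]_p) :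
  X \is unitarymx -> H \in unitmx -> X *m H = diag_mx d *m X ->
  forall k, d 0 k != 0.
Proof.
move=> /unitarymxP XX Hu XH k; apply/eqP => dk0.
have Xk0 : row k X = 0.
  have := congr1 (row k) XH.
  rewrite !row_mul row_diag_mx -scalemxAl -rowE dk0 scale0r.
  by move/(congr1 (mulmx^~ (invmx H))); rewrite mulmxK // mul0mx.
have := congr1 (row k) XX; rewrite row_mul Xk0 mul0mx => /rowP/(_ k).
by rewrite !mxE eqxx => /eqP; rewrite eq_sym oner_eq0.
Qed.

End Eigenrows.

Section SwapSymmetry.
Context {C : numClosedFieldType} (N : nat).

Definition swap_mx : 'M[C]_(N + N) := block_mx 0 1%:M 1%:M 0.
Definition sign_mx : 'M[C]_(N + N) := block_mx 1%:M 0 0 (- 1%:M).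

Local Notation Gamma := swap_mx.
Local Notation Sigma := sign_mx.

Definition swap_odd (H : 'M[C]_(N + N)) := Gamma *m map_mx conjC H *m Gamma = - H.

Lemma swap_mxK : Gamma *m Gamma = 1%:M.
Proof.
by rewrite mulmx_block !mul0mx !mulmx0 !mul1mx !add0r !addr0 -scalar_mx_block.
Qed.

Lemma conj_swap_mx : map_mx conjC Gamma = Gamma.
Proof. by rewrite map_block_mx map_mx0 map_mx1. Qed.

Lemma trmxC_swap_mx : Gamma^t* = Gamma.
Proof. by rewrite tr_block_mx trmx0 trmx1 map_block_mx map_mx0 map_mx1. Qed.

Lemma swap_mx_unitary : Gamma \is unitarymx.
Proof. by apply/unitarymxP; rewrite trmxC_swap_mx swap_mxK. Qed.

Lemma mul_swap_col_mx m (A B : 'M[C]_(N, m)) : Gamma *m col_mx A B = col_mx B A.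
Proof. by rewrite mul_block_col !mul0mx !mul1mx add0r addr0. Qed.

Lemma swap_diag_row_mx (a : 'rV[C]_N) :
  Gamma *m diag_mx (row_mx a a) = diag_mx (row_mx a a) *m Gamma.
Proof.
by rewrite diag_mx_row !mulmx_block !mul0mx !mulmx0 !mul1mx !mulmx1 !add0r !addr0.
Qed.

Lemma swap_block_const_mx (A : 'M[C]_N) :
  Gamma *m block_mx A A A A *m Gamma = block_mx A A A A.
Proof.
by rewrite !mulmx_block !mul0mx !mulmx0 !mul1mx !mulmx1 !add0r !addr0.
Qed.

Lemma swap_sign_mx : Gamma *m Sigma *m Gamma = - Sigma.
Proof.
rewrite !mulmx_block !mul0mx !mulmx0 !mul1mx !mulmx1 !add0r !addr0.
by rewrite /sign_mx opp_block_mx oppr0 opprK.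
Qed.

Lemma conj_sign_mx : map_mx conjC Sigma = Sigma.
Proof. by rewrite map_block_mx map_mx0 map_mxN map_mx1. Qed.

Lemma trmxC_sign_mx : Sigma^t* = Sigma.
Proof. by rewrite -map_trmx conj_sign_mx tr_block_mx trmx0 linearN /= trmx1. Qed.

Lemma sign_diag_row_mx (a : 'rV[C]_N) :
  Sigma *m diag_mx (row_mx a a) = diag_mx (row_mx a (- a)).
Proof.
rewrite !diag_mx_row mulmx_block !mul0mx !mulmx0 mul1mx mulNmx mul1mx.
by rewrite !add0r !addr0 diag_mxN.
Qed.

Lemma diag_row_mx_sign (a : 'rV[C]_N) :
  diag_mx (row_mx a a) *m Sigma = diag_mx (row_mx a (- a)).
Proof.
rewrite !diag_mx_row mulmx_block !mul0mx !mulmx0 mulmx1 mulmxN mulmx1.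
by rewrite !add0r !addr0 diag_mxN.
Qed.

Section SwapOdd.
Variable H : 'M[C]_(N + N).
Hypothesis H_odd : swap_odd H.

Lemma swap_odd_anticomm : Gamma *m H = - (map_mx conjC H *m Gamma).
Proof.
have GHG : Gamma *m H *m Gamma = - map_mx conjC H.
  by rewrite -map_mxN -H_odd !map_mxM conj_swap_mx map_mxCK.
by rewrite -mulNmx -GHG -[RHS]mulmxA swap_mxK mulmx1.
Qed.

Lemma eigenrows_swap_conj p (X : 'M[C]_(p, N + N)) (a : 'rV[C]_p) :
  map_mx conjC a = a -> X *m H = diag_mx a *m X ->
  (map_mx conjC X *m Gamma) *m H = diag_mx (- a) *m (map_mx conjC X *m Gamma).
Proof.
move=> a_real XH.
rewrite -mulmxA swap_odd_anticomm mulmxN !mulmxA -map_mxM XH.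
rewrite map_mxM map_diag_mx a_real.
by rewrite diag_mxN !mulNmx.
Qed.

End SwapOdd.

Lemma swap_conj_unitarymx p (X : 'M[C]_(p, N + N)) :
  X \is unitarymx -> map_mx conjC X *m Gamma \is unitarymx.
Proof. by move=> Xu; rewrite mul_unitarymx ?conjC_unitary ?swap_mx_unitary. Qed.

End SwapSymmetry.

Section SwapOddSpectrum.
Context {C : numClosedFieldType} (N : nat).
Local Notation Gamma := (@swap_mx C N).
Local Notation Sigma := (@sign_mx C N).

Lemma card_pos_eigenvalues_leq (P H : 'M[C]_(N + N)) (d : 'rV[C]_(N + N))
    (S : {set 'I_(N + N)}) :
  P \is unitarymx -> P *m H = diag_mx d *m P -> swap_odd H ->
  {in S, forall k, 0 < d 0 k} -> (#|S| + #|S| <= N + N)%N.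
Proof.
move=> Pu PH H_odd d_gt0.
pose g : 'I_#|S| -> 'I_(N + N) := enum_val.
have a_gt0 i : 0 < colsub g d 0 i by rewrite mxE d_gt0 ?enum_valP.
have Eu : rowsub g P \is unitarymx := rowsub_unitarymx enum_val_inj Pu.
have EH := rowsub_eigenrows g PH.
apply: (pos_neg_eigenrows_leq Eu (swap_conj_unitarymx Eu) a_gt0 a_gt0 EH).
apply: (eigenrows_swap_conj H_odd) EH.
by apply: conj_mx_pos => i j; rewrite ord1.
Qed.

Lemma card_pos_eigenvalues (P H : 'M[C]_(N + N)) (d : 'rV[C]_(N + N)) :
  P \is unitarymx -> H \in unitmx -> P *m H = diag_mx d *m P ->
  d \is a realmx -> swap_odd H ->
  #|[set k | 0 < d 0 k]| = N.
Proof.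
move=> Pu Hu PH /mxOverP d_real H_odd; set S := [set k | _].
have le_pos : (#|S| + #|S| <= N + N)%N.
  by apply: card_pos_eigenvalues_leq Pu PH H_odd _ => k; rewrite inE.
have le_neg : (#|~: S| + #|~: S| <= N + N)%N.
  apply: (card_pos_eigenvalues_leq (H := - H) (d := - d) Pu).
  - by rewrite mulmxN PH diag_mxN mulNmx.
  - by rewrite /swap_odd map_mxN mulmxN mulNmx H_odd.
  move=> k; rewrite !inE mxE oppr_gt0 => dk.
  rewrite real_ltNge ?d_real // le_eqVlt negb_or dk andbT eq_sym.
  exact: eigenvalue_unit_neq0 Pu Hu PH k.
move: le_pos le_neg (cardsC S); rewrite card_ord.
by set a := #|S|; set b := #|~: S|; lia.
Qed.

Section SwapOddHermitian.
Variable H : 'M[C]_(N + N).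
Hypotheses (H_herm : H^t* = H) (H_odd : swap_odd H).

Lemma swap_completion_normal_form (E : 'M[C]_(N, N + N)) (lam : 'rV[C]_N) :
  E \is unitarymx -> (forall i, 0 < lam 0 i) -> E *m H = diag_mx lam *m E ->
  let V := col_mx E (map_mx conjC E *m Gamma) in
  [/\ V \is unitarymx, V = Gamma *m map_mx conjC V *m Gamma &
      V *m H *m V^t* = diag_mx (row_mx lam (- lam))].
Proof.
move=> Eu lam_gt0 EH V; set F := map_mx conjC E *m Gamma.
have lam_real : map_mx conjC lam = lam by apply: conj_mx_pos => i j; rewrite ord1.
have FH : F *m H = diag_mx (- lam) *m F := eigenrows_swap_conj H_odd lam_real EH.
have EF : E *m F^t* = 0.
  apply: eigenrows_orthogonal H_herm EH FH _ => i j.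
  have /rowP/(_ j) := lam_real; rewrite !mxE => lamj; rewrite rmorphN /= lamj.
  by rewrite gt_eqF // (lt_trans _ (lam_gt0 i)) // oppr_lt0.
have Vu : V \is unitarymx := col_mx_unitarymx Eu (swap_conj_unitarymx Eu) EF.
split=> //.
  rewrite map_col_mx map_mxM map_mxCK conj_swap_mx mul_swap_col_mx.
  by rewrite mul_col_mx -mulmxA swap_mxK mulmx1.
by rewrite (col_mx_eigenrows EH FH) -mulmxA (unitarymxP Vu) mulmx1.
Qed.

Lemma swap_odd_hermitian_normal_form : H \in unitmx ->
  exists (V : 'M[C]_(N + N)) (lam : 'rV[C]_N),
    [/\ forall i, 0 < lam 0 i, V \is unitarymx,
        V = Gamma *m map_mx conjC V *m Gamma &
        V *m H *m V^t* = diag_mx (row_mx lam (- lam))].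
Proof.
move=> Hu; set P := spectralmx H; set d := spectral_diag H.
have H_hermsym : H \is hermsymmx.
  by apply/is_hermitianmxP; rewrite expr0 scale1r H_herm.
have Pu : P \is unitarymx := spectral_unitarymx H.
have PH : P *m H = diag_mx d *m P.
  have /orthomx_spectralP -> := hermitian_normalmx H_hermsym.
  by rewrite -/P -/d invmx_unitary // !mulmxA (unitarymxP Pu) mul1mx.
have card_pos := card_pos_eigenvalues Pu Hu PH
  (hermitian_spectral_diag_real H_hermsym) H_odd.
pose g (i : 'I_N) : 'I_(N + N) := enum_val (cast_ord (esym card_pos) i).
have g_inj : injective g by move=> i j /enum_val_inj /cast_ord_inj.
have lam_gt0 i : 0 < colsub g d 0 i.
  by rewrite mxE; have := enum_valP (cast_ord (esym card_pos) i); rewrite inE.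
have [Vu VG VH] := swap_completion_normal_form
  (rowsub_unitarymx g_inj Pu) lam_gt0 (rowsub_eigenrows g PH).
by exists (col_mx (rowsub g P) (map_mx conjC (rowsub g P) *m Gamma)), (colsub g d).
Qed.

End SwapOddHermitian.

Lemma swap_diag_pos (a : 'rV[C]_N) : (forall i, 0 < a 0 i) ->
  let D := diag_mx (row_mx a a) in
  [/\ D^t* = D, map_mx conjC D = D & comm_mx Gamma D].
Proof.
move=> a_gt0 D; have aa_gt0 := row_mx_gt0 a_gt0 a_gt0.
rewrite trmxC_diag_mx_pos // conj_diag_mx_pos //.
by split=> //; apply: swap_diag_row_mx.
Qed.

Section NormalModes.
Variables (Rm : 'M[C]_(N + N)) (r : 'rV[C]_N).
Hypotheses (Rm_herm : Rm^t* = Rm) (Rm_unit : Rm \in unitmx) (Rm_odd : swap_odd Rm).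
Hypothesis r_gt0 : forall i, 0 < r 0 i.

Let W := diag_mx (row_mx (inv_sqrt_row r) (inv_sqrt_row r)).

Lemma rescaled_swap_odd_hermitian :
  let H := W *m Rm *m W in H^t* = H /\ swap_odd H.
Proof.
have [W_herm W_conj W_swap] := swap_diag_pos (inv_sqrt_row_gt0 r_gt0).
split; first by rewrite !trmxC_mul W_herm Rm_herm mulmxA.
by rewrite /swap_odd !map_mxM W_conj comm_mx_sandwich // Rm_odd mulmxN mulNmx.
Qed.

Lemma rescaled_Omega : W *m diag_mx (row_mx r r) *m W = 1%:M.
Proof.
by rewrite /W -inv_sqrt_row_mx (diag_inv_sqrt_rowK (row_mx_gt0 r_gt0 r_gt0)).
Qed.

Lemma normal_modes_of_normal_form (V : 'M[C]_(N + N)) (lam : 'rV[C]_N) :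
  (forall i, 0 < lam 0 i) -> V \is unitarymx ->
  V = Gamma *m map_mx conjC V *m Gamma ->
  V *m (W *m Rm *m W) *m V^t* = diag_mx (row_mx lam (- lam)) ->
  let T := W *m V^t* *m diag_mx (row_mx (inv_sqrt_row lam) (inv_sqrt_row lam)) in
  [/\ T^t* *m Rm *m T = Sigma, T = Gamma *m map_mx conjC T *m Gamma &
      Sigma *m T^t* *m Rm *m (invmx Rm *m diag_mx (row_mx r r)) *m T
      = diag_mx (row_mx (map_mx GRing.inv lam) (- map_mx GRing.inv lam))].
Proof.
move=> lam_gt0 Vu V_swap VHV T; rewrite {}/T.
have [W_herm W_conj W_swap] := swap_diag_pos (inv_sqrt_row_gt0 r_gt0).
have [D_herm D_conj D_swap] := swap_diag_pos (inv_sqrt_row_gt0 lam_gt0).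
set D := diag_mx (row_mx (inv_sqrt_row lam) _) in D_herm D_conj D_swap *.
have D_sign : Sigma *m D = D *m Sigma by rewrite sign_diag_row_mx diag_row_mx_sign.
have lamlam_gt0 := row_mx_gt0 lam_gt0 lam_gt0.
rewrite !trmxC_mul trmxCK W_herm D_herm; split.
- rewrite !mulmxA.
  have -> : D *m V *m W *m Rm *m W *m V^t* *m D
            = D *m (V *m (W *m Rm *m W) *m V^t*) *m D.
    by rewrite !mulmxA.
  rewrite VHV -diag_row_mx_sign mulmxA -(mulmxA _ Sigma) D_sign mulmxA /D.
  by rewrite -inv_sqrt_row_mx diag_inv_sqrt_rowK // mul1mx.
- have V_swapT : V^t* = Gamma *m V^T *m Gamma.
    by rewrite {1}V_swap !trmxC_mul trmxC_swap_mx -map_trmx map_mxCK mulmxA.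
  by rewrite !map_mxM W_conj D_conj map_mxCK comm_mx_sandwich // V_swapT.
rewrite !mulmxA.
have -> : Sigma *m D *m V *m W *m Rm *m invmx Rm *m diag_mx (row_mx r r)
          *m W *m V^t* *m D
          = Sigma *m D *m V *m (W *m diag_mx (row_mx r r) *m W) *m V^t* *m D.
  by rewrite !mulmxA mulmxK.
rewrite rescaled_Omega mulmx1 -(mulmxA _ V) (unitarymxP Vu) mulmx1 -mulmxA /D.
by rewrite -inv_sqrt_row_mx diag_inv_sqrt_row_sqr // map_row_mx sign_diag_row_mx.
Qed.

Lemma swap_odd_normal_modes :
  exists (T : 'M[C]_(N + N)) (mu : 'rV[C]_N), (forall i, 0 < mu 0 i) /\
  [/\ T^t* *m Rm *m T = Sigma, T = Gamma *m map_mx conjC T *m Gamma &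
      Sigma *m T^t* *m Rm *m (invmx Rm *m diag_mx (row_mx r r)) *m T
      = diag_mx (row_mx mu (- mu))].
Proof.
have [H_herm H_odd] := rescaled_swap_odd_hermitian.
have W_unit : W \in unitmx.
  by case/mulmx1_unit: rescaled_Omega => /[swap] _; rewrite unitmx_mul => /andP[].
have H_unit : W *m Rm *m W \in unitmx by rewrite !unitmx_mul W_unit Rm_unit.
have [V [lam [lam_gt0 Vu V_swap VHV]]] :=
  swap_odd_hermitian_normal_form H_herm H_odd H_unit.
eexists; exists (map_mx GRing.inv lam); split.
  by move=> i; rewrite mxE invr_gt0.
exact: normal_modes_of_normal_form lam_gt0 Vu V_swap VHV.
Qed.

End NormalModes.
End SwapOddSpectrum.

Section NormalModeMatrices.
Context {R : realType} {N M : nat} {c : nat -> R} {Ls v L : R}.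
Local Notation C := R[i].
Local Notation sigma := (sigma_mx N M c Ls v L).
Local Notation Rmx := (R_mx N M c Ls v L).
Local Notation Omega := (Omega_mx N M c Ls v L).

Lemma Sigma_mxE : Sigma_mx N = sign_mx N :> 'M[C]_(N + N). Proof. by []. Qed.

Lemma mxHE m n (A : 'M[C]_(m, n)) : mxH A = A^t*.
Proof. by rewrite /mxH /mxconj map_trmx. Qed.

Lemma conj_imaginary (x : R) : conjC ('i * x%:C)%C = - ('i * x%:C)%C :> C.
Proof.
apply/eqP; rewrite eq_complex /=.
by rewrite !(mul0r, mulr0, mul1r, subr0, add0r, oppr0, eqxx).
Qed.

Lemma conj_sigma_mx : map_mx conjC sigma = - sigma.
Proof.
apply/matrixP => i j; rewrite !mxE; case: eqP => _; last exact: conj_imaginary.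
by rewrite rmorph0 oppr0.
Qed.

Lemma trmx_sigma_mx : sigma^T = - sigma.
Proof.
apply/matrixP => i j; rewrite !mxE eq_sym; case: eqP => _; first by rewrite oppr0.
rewrite -mulrN -rmorphN /=; congr (_ * (_ %:C)%C).
rewrite (mulrC j.+1%:R) (mulrC (un M c Ls v L j.+1)) addnC.
by rewrite -[X in _ / (_ * X)]opprB mulrN invrN mulrN.
Qed.

Lemma trmxC_sigma_mx : sigma^t* = sigma.
Proof. by rewrite trmx_sigma_mx map_mxN conj_sigma_mx opprK. Qed.

Lemma trmxC_R_mx : Rmx^t* = Rmx.
Proof.
by rewrite /R_mx Sigma_mxE linearB map_mxB /= trmxC_sign_mx tr_block_mx
  map_block_mx trmxC_sigma_mx.
Qed.

Lemma swap_odd_R_mx : swap_odd Rmx.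
Proof.
rewrite /swap_odd /R_mx Sigma_mxE map_mxB conj_sign_mx map_block_mx conj_sigma_mx.
rewrite -opp_block_mx mulmxBr mulmxBl swap_sign_mx mulmxN mulNmx.
by rewrite swap_block_const_mx opprB opprK addrC.
Qed.

Lemma posdef_Omega_diag : posdef Omega ->
  exists2 r : 'rV[C]_N, (forall i, 0 < r 0 i) & Omega = diag_mx (row_mx r r).
Proof.
(* Testing positivity on basis vectors forces every epsilon_n to be 1. *)
move=> [_ Omega_pos].
pose rho (i : 'I_N) := i.+1%:R * un M c Ls v L i.+1 * epsn M c Ls v L i.+1.
have rho_gt0 i : 0 < rho i.
  pose x : 'cV[C]_(N + N) := delta_mx (lshift N i) 0.
  have x_neq0 : x != 0.
    by apply/negP => /eqP/matrixP/(_ (lshift N i) 0)/eqP; rewrite !mxE !eqxx oner_eq0.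
  have := Omega_pos x x_neq0; rewrite mxHE /x trmx_delta map_delta_mx -rowE -colE.
  rewrite [X in 0 < X]mxE [X in 0 < X]mxE block_mxEul mxE eqxx mulr1n mxE.
  by rewrite ltcR.
have eps1 (i : 'I_N) : epsn M c Ls v L i.+1 = 1.
  by move: (rho_gt0 i); rewrite /rho /epsn; case: ifP => // _; rewrite mulr0 ltxx.
have xi0 : xi_mx N M c Ls v L = 0.
  by apply/matrixP => i j; rewrite !mxE eps1 subrr mulr0 oppr0 mul0rn.
exists (\row_i (rho i)%:C%C); first by move=> i; rewrite mxE ltcR.
by rewrite /Omega_mx xi0 diag_mx_row.
Qed.

End NormalModeMatrices.

Theorem lemma4 (R : realType) (N : nat) (v L Ls : R) (M : nat) (c : nat -> R) :
  (0 < N)%N -> `|v| < 1 -> 0 < L -> 0 <= Ls -> (0 < M)%N -> c 1%N = 1 ->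
  (forall n : nat, (1 <= n <= N)%N -> discr M c Ls v L n != 0) ->
  R_mx N M c Ls v L \in unitmx ->
  posdef (Omega_mx N M c Ls v L) ->
  exists T : 'M[R[i]]_(N + N), normal_mode_transformation N M c Ls v L T.
Proof.
(* Only the invertibility of R and the positivity of Omega enter the
   construction; the remaining hypotheses are physical side conditions. *)
move=> _ _ _ _ _ _ _ R_unit /posdef_Omega_diag [r r_gt0 Omega_r].
have [T [mu [mu_gt0 [TRT T_swap TDT]]]] :=
  swap_odd_normal_modes trmxC_R_mx R_unit swap_odd_R_mx r_gt0.
have mu_real i : ((complex.Re (mu 0 i))%:C)%C = mu 0 i.
  by rewrite RRe_real // gtr0_real.
exists T; split; first by rewrite mxHE.
  exact: T_swap.
exists (fun i => complex.Re (mu 0 i)); split.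
  by move=> i; rewrite -ltcR mu_real.
rewrite mxHE /D_mx Omega_r TDT; congr (diag_mx (row_mx _ _)); apply/rowP => k.
  by rewrite !mxE mu_real.
by rewrite !mxE rmorphN /= mu_real.
Qed.
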